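(* Let $\mathscr M,\mathscr N$ be convex, weakly compact subsets of $ba(\mathcal A)$. Then (i) $\mathscr M\cap\mathscr N=\varnothing$ if and only if there exists $f\in\mathcal S(\mathcal A)$ with $\inf_{\nu\in\mathscr N}\nu(f)>\sup_{\mu\in\mathscr M}\mu(f)$; and (ii) there exist $\mathcal K\subset\mathcal S(\mathcal A)$ and a set $\mathscr M_0$ of extreme points of $\mathscr M$ such that $\mathscr M=\{m\in ba(\mathcal A):m(k)\le\max_{\mu\in\mathscr M_0}\mu(k)\text{ for all }k\in\mathcal K\}$.
   Context: $\mathcal A$ algebra of subsets of $\Omega$; $ba(\mathcal A)$ the Banach space of bounded finitely additive real set functions with total variation norm; ''weakly'' refers to the weak topology of this Banach space. $\mathcal S(\mathcal A)$ the $\mathcal A$-simple functions and $\mu(f)=\int f\,d\mu$. *)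

From Stdlib Require Import Reals Lra List ClassicalEpsilon.
Open Scope R_scope.

Definition setfun (Omega : Type) := (Omega -> Prop) -> R.

Definition is_algebra {Omega : Type} (A : (Omega -> Prop) -> Prop) : Prop :=
  A (fun _ => True) /\
  (forall E, A E -> A (fun w => ~ E w)) /\
  (forall E F, A E -> A F -> A (fun w => E w \/ F w)).

Definition is_partition {Omega : Type} (A : (Omega -> Prop) -> Prop)
  (Es : list (Omega -> Prop)) : Prop :=
  Forall A Es /\
  (forall i j, (i < length Es)%nat -> (j < length Es)%nat -> i <> j ->
     forall w, ~ (nth i Es (fun _ => False) w /\ nth j Es (fun _ => False) w)) /\
  (forall w, exists E, In E Es /\ E w).

Definition var_sum {Omega : Type} (mu : setfun Omega) (Es : list (Omega -> Prop)) : R :=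
  fold_right (fun E acc => Rabs (mu E) + acc) 0 Es.

Definition var_sums {Omega : Type} (A : (Omega -> Prop) -> Prop) (mu : setfun Omega) : R -> Prop :=
  fun s => exists Es, is_partition A Es /\ s = var_sum mu Es.

Definition tv_norm_is {Omega : Type} (A : (Omega -> Prop) -> Prop) (mu : setfun Omega) (r : R) : Prop :=
  is_lub (var_sums A mu) r.

(* Elements of ba(A): bounded finitely additive real set functions on A,
   normalised to be 0 off A (so they are determined by their values on A). *)
Definition is_ba {Omega : Type} (A : (Omega -> Prop) -> Prop) (mu : setfun Omega) : Prop :=
  (forall E, ~ A E -> mu E = 0) /\
  (forall E F, A E -> A F -> (forall w, ~ (E w /\ F w)) ->
      mu (fun w => E w \/ F w) = mu E + mu F) /\
  (exists c, forall s, var_sums A mu s -> s <= c).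

Definition ba_lincomb {Omega : Type} (a : R) (mu : setfun Omega) (b : R) (nu : setfun Omega)
  : setfun Omega := fun E => a * mu E + b * nu E.

Definition is_dual {Omega : Type} (A : (Omega -> Prop) -> Prop) (phi : setfun Omega -> R) : Prop :=
  (forall a b mu nu, is_ba A mu -> is_ba A nu ->
      phi (ba_lincomb a mu b nu) = a * phi mu + b * phi nu) /\
  (exists C, forall mu r, is_ba A mu -> tv_norm_is A mu r -> Rabs (phi mu) <= C * r).

Definition weak_open {Omega : Type} (A : (Omega -> Prop) -> Prop) (U : setfun Omega -> Prop) : Prop :=
  forall mu, U mu -> is_ba A mu /\
    exists (phis : list (setfun Omega -> R)) (eps : R),
      Forall (is_dual A) phis /\ 0 < eps /\
      forall nu, is_ba A nu ->
        (forall phi, In phi phis -> Rabs (phi nu - phi mu) < eps) -> U nu.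

Definition weakly_compact {Omega : Type} (A : (Omega -> Prop) -> Prop) (K : setfun Omega -> Prop) : Prop :=
  (forall mu, K mu -> is_ba A mu) /\
  forall (I : Type) (U : I -> setfun Omega -> Prop),
    (forall i, weak_open A (U i)) ->
    (forall mu, K mu -> exists i, U i mu) ->
    exists l : list I, forall mu, K mu -> exists i, In i l /\ U i mu.

Definition convex {Omega : Type} (K : setfun Omega -> Prop) : Prop :=
  forall mu nu t, K mu -> K nu -> 0 <= t <= 1 -> K (ba_lincomb t mu (1 - t) nu).

Definition extreme_point {Omega : Type} (K : setfun Omega -> Prop) (mu : setfun Omega) : Prop :=
  K mu /\
  forall mu1 mu2 t, K mu1 -> K mu2 -> 0 < t < 1 ->
    mu = ba_lincomb t mu1 (1 - t) mu2 -> mu1 = mu2.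

(* A-simple functions, given by a representation f = sum_i a_i 1_{E_i}, E_i in A. *)
Definition simple_rep (Omega : Type) := list (R * (Omega -> Prop)).

Definition is_simple {Omega : Type} (A : (Omega -> Prop) -> Prop) (f : simple_rep Omega) : Prop :=
  Forall (fun p => A (snd p)) f.

Definition simple_eval {Omega : Type} (f : simple_rep Omega) (w : Omega) : R :=
  fold_right (fun p acc =>
    (if excluded_middle_informative (snd p w) then fst p else 0) + acc) 0 f.

Definition integral {Omega : Type} (mu : setfun Omega) (f : simple_rep Omega) : R :=
  fold_right (fun p acc => fst p * mu (snd p) + acc) 0 f.

From Stdlib Require Import Reals Lra Lia List Classical FunctionalExtensionality.
From mathcomp Require classical_sets boolp.
Open Scope R_scope.

(* (i) If M and N are disjoint, compactness of M x N yields finitely many sets L of A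
   telling every mu in M from every nu in N.  In the coordinates (mu(E))_{E in L} choose a
   closest pair (mu0, nu0); with p = nu0 - mu0, convexity and first-order optimality give
   <p, nu - mu> >= <p, p> > 0, so f = sum_{E in L} p(E) 1_E separates M from N strictly.

   (ii) Take K = all simple functions and M0 = all extreme points.  Each integral
   attains its maximum over M on a nonempty relatively closed face; by Zorn's lemma (the
   intersection of a chain of such faces is again one, by compactness) this face contains a
   minimal one, which is a single point because two distinct points could be split by a
   further maximisation, and that point is extreme.  Points outside M are excluded by (i)
   applied to M and a singleton. *)

Lemma integral_lincomb {Omega : Type} (a b : R) (mu nu : setfun Omega) (f : simple_rep Omega) :
  integral (ba_lincomb a mu b nu) f = a * integral mu f + b * integral nu f.
Proof.
  induction f as [|[c E] f IH]; simpl; [ring|].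
  rewrite IH. unfold ba_lincomb. ring.
Qed.

(* The value on a single set of the algebra is bounded by the variation norm,
   via the partition {E, complement of E}. *)
Lemma abs_le_tv_norm {Omega : Type} (A : (Omega -> Prop) -> Prop) (HA : is_algebra A)
  (mu : setfun Omega) (r : R) (E : Omega -> Prop) :
  tv_norm_is A mu r -> A E -> Rabs (mu E) <= r.
Proof.
  intros [Hub _] HE.
  set (Es := E :: (fun w => ~ E w) :: nil).
  assert (Hpart : is_partition A Es).
  { split; [|split].
    - repeat constructor; auto. apply HA; auto.
    - intros i j Hi Hj Hij w [H1 H2]. simpl in Hi, Hj.
      destruct i as [|[|i]]; destruct j as [|[|j]]; simpl in *; try lia; tauto.
    - intros w. destruct (classic (E w)).
      + exists E; simpl; auto.
      + exists (fun w => ~ E w); simpl; auto. }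
  assert (Hle : var_sum mu Es <= r) by (apply Hub; exists Es; auto).
  simpl in Hle. pose proof (Rabs_pos (mu (fun w => ~ E w))). lra.
Qed.

Lemma integral_dual {Omega : Type} (A : (Omega -> Prop) -> Prop) (HA : is_algebra A)
  (f : simple_rep Omega) :
  is_simple A f -> is_dual A (fun mu => integral mu f).
Proof.
  intros Hf. split; [intros; apply integral_lincomb|].
  exists (fold_right (fun p acc => Rabs (fst p) + acc) 0 f).
  intros mu r _ Hr. induction Hf as [|[c E] f HE _ IH]; simpl.
  - rewrite Rabs_R0, Rmult_0_l; lra.
  - pose proof (abs_le_tv_norm A HA mu r E Hr HE). pose proof (Rabs_pos c).
    eapply Rle_trans; [apply Rabs_triang|]. rewrite Rabs_mult. simpl in *. nra.
Qed.

Lemma evaluation_dual {Omega : Type} (A : (Omega -> Prop) -> Prop) (HA : is_algebra A)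
  (E : Omega -> Prop) :
  A E -> is_dual A (fun mu => mu E).
Proof.
  intros HE. split; [intros; reflexivity|].
  exists 1. intros mu r _ Hr. rewrite Rmult_1_l. exact (abs_le_tv_norm A HA mu r E Hr HE).
Qed.

(* Elements of ba(A) vanish off A, so two distinct ones differ on some set of A. *)
Lemma ba_separated_by_set {Omega : Type} (A : (Omega -> Prop) -> Prop) (mu nu : setfun Omega) :
  is_ba A mu -> is_ba A nu -> mu <> nu -> exists E, A E /\ mu E <> nu E.
Proof.
  intros [Hmu _] [Hnu _] Hne. apply NNPP. intros Hno. apply Hne.
  apply functional_extensionality. intros E. destruct (classic (A E)) as [HE|HE].
  - apply NNPP. intros Hx. apply Hno. exists E. auto.
  - rewrite (Hmu E HE), (Hnu E HE). reflexivity.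
Qed.

Lemma lt_open (b y : R) : y < b -> exists e, 0 < e /\ forall z, Rabs (z - y) < e -> z < b.
Proof. intros Hy. exists (b - y). split; [lra|]. intros z Hz. apply Rabs_def2 in Hz. lra. Qed.

Lemma ball_open (c r y : R) : Rabs (y - c) < r ->
  exists e, 0 < e /\ forall z, Rabs (z - y) < e -> Rabs (z - c) < r.
Proof.
  intros H. exists (r - Rabs (y - c)). split; [lra|]. intros z Hz.
  replace (z - c) with ((z - y) + (y - c)) by ring.
  eapply Rle_lt_trans; [apply Rabs_triang|lra].
Qed.

Lemma weak_open_preimage {Omega : Type} (A : (Omega -> Prop) -> Prop)
  (phi : setfun Omega -> R) (Q : R -> Prop) :
  is_dual A phi -> (forall y, Q y -> exists e, 0 < e /\ forall z, Rabs (z - y) < e -> Q z) ->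
  weak_open A (fun x => is_ba A x /\ Q (phi x)).
Proof.
  intros Hphi HQ mu [Hmu Hq]. split; [exact Hmu|].
  destruct (HQ _ Hq) as [e [He Hz]].
  exists (phi :: nil), e. split; [constructor; auto|split; [exact He|]].
  intros nu Hnu Hin. split; [exact Hnu|]. apply Hz, Hin. simpl; auto.
Qed.

Lemma weak_open_union {Omega : Type} (A : (Omega -> Prop) -> Prop) (I : Type)
  (U : I -> setfun Omega -> Prop) :
  (forall i, weak_open A (U i)) -> weak_open A (fun x => exists i, U i x).
Proof.
  intros H mu [i Hi]. destruct (H i mu Hi) as [Hb [phis [eps [H1 [H2 H3]]]]].
  split; [exact Hb|]. exists phis, eps. repeat split; auto.
  intros nu Hnu Hin. exists i. auto.
Qed.

Lemma weak_open_or {Omega : Type} (A : (Omega -> Prop) -> Prop) (U V : setfun Omega -> Prop) :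
  weak_open A U -> weak_open A V -> weak_open A (fun x => U x \/ V x).
Proof.
  intros HU HV mu [Hm|Hm].
  - destruct (HU mu Hm) as [Hb [phis [eps [H1 [H2 H3]]]]].
    split; [exact Hb|]. exists phis, eps. repeat split; auto.
  - destruct (HV mu Hm) as [Hb [phis [eps [H1 [H2 H3]]]]].
    split; [exact Hb|]. exists phis, eps. repeat split; auto.
Qed.

Lemma weak_open_finite_inter {Omega : Type} (A : (Omega -> Prop) -> Prop) (I : Type)
  (U : I -> setfun Omega -> Prop) (l : list I) :
  (forall i, In i l -> weak_open A (U i)) ->
  weak_open A (fun x => is_ba A x /\ forall i, In i l -> U i x).
Proof.
  induction l as [|i l IH]; intros H mu [Hmu Hall].
  - split; [exact Hmu|]. exists nil, 1. split; [constructor|split; [lra|]].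
    intros nu Hnu _. split; [exact Hnu|]. intros i [].
  - split; [exact Hmu|].
    destruct (H i (or_introl eq_refl) mu (Hall i (or_introl eq_refl)))
      as [_ [phis1 [e1 [F1 [E1 H1]]]]].
    destruct (IH (fun j Hj => H j (or_intror Hj)) mu)
      as [_ [phis2 [e2 [F2 [E2 H2]]]]].
    { split; [exact Hmu|]. intros j Hj. apply Hall. simpl; auto. }
    exists (phis1 ++ phis2), (Rmin e1 e2).
    split; [apply Forall_app; auto|split; [apply Rmin_glb_lt; auto|]].
    intros nu Hnu Hin. split; [exact Hnu|]. intros j [<-|Hj].
    + apply H1; [exact Hnu|]. intros phi Hp.
      eapply Rlt_le_trans; [apply Hin, in_or_app; auto|apply Rmin_l].
    + refine (proj2 (H2 nu Hnu _) j Hj). intros phi Hp.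
      eapply Rlt_le_trans; [apply Hin, in_or_app; auto|apply Rmin_r].
Qed.

Definition coord_nbhd {Omega : Type} (A : (Omega -> Prop) -> Prop) (L : list (Omega -> Prop))
  (mu : setfun Omega) (r : R) : setfun Omega -> Prop :=
  fun x => is_ba A x /\ forall E, In E L -> Rabs (x E - mu E) < r.

Lemma coord_nbhd_open {Omega : Type} (A : (Omega -> Prop) -> Prop) (HA : is_algebra A)
  (L : list (Omega -> Prop)) (mu : setfun Omega) (r : R) :
  (forall E, In E L -> A E) -> weak_open A (coord_nbhd A L mu r).
Proof.
  intros HL x [Hx Hall].
  assert (Hopen : weak_open A (fun x => is_ba A x /\ forall E, In E L ->
                    is_ba A x /\ Rabs (x E - mu E) < r)).
  { apply (weak_open_finite_inter A _ (fun E x => is_ba A x /\ Rabs (x E - mu E) < r)).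
    intros E HE. apply (weak_open_preimage A (fun x => x E) (fun y => Rabs (y - mu E) < r)).
    - apply evaluation_dual; auto.
    - intros y Hy. apply ball_open; auto. }
  assert (Hin_x : is_ba A x /\ forall E, In E L -> is_ba A x /\ Rabs (x E - mu E) < r)
    by (split; auto).
  destruct (Hopen x Hin_x) as [_ [phis [eps [H1 [H2 H3]]]]].
  split; [exact Hx|]. exists phis, eps. split; [exact H1|split; [exact H2|]].
  intros y Hy Hin. destruct (H3 y Hy Hin) as [_ Hc]. split; [exact Hy|].
  intros E HE. apply Hc; auto.
Qed.

Lemma coord_nbhd_center {Omega : Type} (A : (Omega -> Prop) -> Prop) (L : list (Omega -> Prop))
  (mu : setfun Omega) (r : R) :
  is_ba A mu -> 0 < r -> coord_nbhd A L mu r mu.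
Proof. intros Hmu Hr. split; [exact Hmu|]. intros E _. rewrite Rminus_diag, Rabs_R0. exact Hr. Qed.

(* Compactness of K with respect to an arbitrary family of "open" sets; weak compactness
   in ba(A) is compactness with respect to [weak_open A] (second component of
   [weakly_compact]). *)
Definition compact_wrt {X : Type} (Open : (X -> Prop) -> Prop) (K : X -> Prop) : Prop :=
  forall (I : Type) (U : I -> X -> Prop),
    (forall i, Open (U i)) -> (forall x, K x -> exists i, U i x) ->
    exists l : list I, forall x, K x -> exists i, In i l /\ U i x.

Lemma list_least {X : Type} (Rl : X -> X -> Prop) (l : list X) :
  (forall a, Rl a a) -> (forall a b c, Rl a b -> Rl b c -> Rl a c) ->
  (forall a b, In a l -> In b l -> Rl a b \/ Rl b a) -> (exists i, In i l) ->
  exists m, In m l /\ forall b, In b l -> Rl m b.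
Proof.
  intros Hrefl Htrans. induction l as [|x l IH]; intros Htot [i Hi]; [destruct Hi|].
  destruct l as [|y l'].
  - exists x. split; [left; reflexivity|]. intros b [<-|[]]. apply Hrefl.
  - destruct IH as [m [Hm Hmin]].
    + intros a b Ha Hb. apply Htot; right; auto.
    + exists y. left; reflexivity.
    + destruct (Htot x m (or_introl eq_refl) (or_intror Hm)) as [H|H].
      * exists x. split; [left; reflexivity|]. intros b [<-|Hb]; [apply Hrefl|eauto].
      * exists m. split; [right; exact Hm|]. intros b [<-|Hb]; auto.
Qed.

(* A lower semicontinuous real function on a nonempty compact set attains its minimum:
   otherwise the sets where it exceeds a smaller value cover K, and the best of the
   finitely many corresponding values would be beaten by another one. *)
Lemma compact_attains_min {X : Type} (Open : (X -> Prop) -> Prop) (K : X -> Prop) (h : X -> R) :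
  compact_wrt Open K -> (exists x, K x) ->
  (forall x c, K x -> c < h x ->
     exists U, Open U /\ U x /\ forall y, K y -> U y -> c < h y) ->
  exists x, K x /\ forall y, K y -> h x <= h y.
Proof.
  intros HKc [x0 Hx0] Hlsc. apply NNPP. intros Hno.
  assert (Hbetter : forall x, K x -> exists y, K y /\ h y < h x).
  { intros x Hx. apply NNPP. intros Hn. apply Hno. exists x. split; [exact Hx|].
    intros y Hy. apply Rnot_lt_le. intros Hlt. apply Hn. eauto. }
  set (Idx := {p : X * (X -> Prop) | K (fst p) /\ Open (snd p) /\
                 forall y, K y -> snd p y -> h (fst p) < h y}).
  destruct (HKc Idx (fun i => snd (proj1_sig i))) as [l Hl].
  - intros i. apply (proj2_sig i).
  - intros x Hx. destruct (Hbetter x Hx) as [y [Hy Hlt]].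
    destruct (Hlsc x (h y) Hx Hlt) as [U [HU [HUx HUc]]].
    exists (exist _ (y, U) (conj Hy (conj HU HUc))). exact HUx.
  - destruct (list_least (fun i j : Idx => h (fst (proj1_sig i)) <= h (fst (proj1_sig j))) l)
      as [m [Hm Hmin]].
    + intros a. lra.
    + intros a b c. lra.
    + intros a b _ _. lra.
    + destruct (Hl x0 Hx0) as [i [Hi _]]. eauto.
    + destruct (proj2_sig m) as [HmK _].
      destruct (Hl _ HmK) as [j [Hj Hjm]]. destruct (proj2_sig j) as [_ [_ Hjlt]].
      specialize (Hjlt _ HmK Hjm). specialize (Hmin j Hj). lra.
Qed.

Definition weak_open2 {Omega : Type} (A : (Omega -> Prop) -> Prop)
  (W : setfun Omega * setfun Omega -> Prop) : Prop :=
  forall p, W p -> exists U V, weak_open A U /\ weak_open A V /\ U (fst p) /\ V (snd p) /\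
    forall q, U (fst q) -> V (snd q) -> W q.

Lemma rect_open2 {Omega : Type} (A : (Omega -> Prop) -> Prop) (U V : setfun Omega -> Prop) :
  weak_open A U -> weak_open A V -> weak_open2 A (fun p => U (fst p) /\ V (snd p)).
Proof.
  intros HU HV p [Hp1 Hp2]. exists U, V.
  split; [exact HU|split; [exact HV|split; [exact Hp1|split; [exact Hp2|]]]]. auto.
Qed.

(* Tube lemma: the product of two weakly compact sets is compact in the product topology. *)
Lemma product_compact {Omega : Type} (A : (Omega -> Prop) -> Prop) (M N : setfun Omega -> Prop) :
  weakly_compact A M -> weakly_compact A N ->
  compact_wrt (weak_open2 A) (fun p => M (fst p) /\ N (snd p)).
Proof.
  intros [HMb HMc] [_ HNc] I U HU Hcov.
  set (T := (I * (setfun Omega -> Prop) * (setfun Omega -> Prop))%type).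
  (* t = (i, V1, V2) is an open rectangle at first coordinate mu inside U i *)
  set (rect := fun mu (t : T) => weak_open A (snd (fst t)) /\ weak_open A (snd t) /\
                 snd (fst t) mu /\ forall q, snd (fst t) (fst q) -> snd t (snd q) -> U (fst (fst t)) q).
  (* finitely many such rectangles at mu cover {mu} x N *)
  set (slice := fun mu (l : list T) => (forall t, In t l -> rect mu t) /\
                  forall nu, N nu -> exists t, In t l /\ snd t nu).
  assert (Hslice : forall mu, M mu -> exists l, slice mu l).
  { intros mu Hmu.
    destruct (HNc {t : T | rect mu t} (fun t => snd (proj1_sig t))) as [l Hl].
    - intros [t Ht]. apply Ht.
    - intros nu Hnu. destruct (Hcov (mu, nu) (conj Hmu Hnu)) as [i Hi].
      destruct (HU i (mu, nu) Hi) as [V1 [V2 [H1 [H2 [H3 [H4 H5]]]]]].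
      exists (exist (rect mu) (i, V1, V2) (conj H1 (conj H2 (conj H3 H5)))). exact H4.
    - exists (map (@proj1_sig _ _) l). split.
      + intros t Ht. apply in_map_iff in Ht. destruct Ht as [[t' Ht'] [<- _]]. exact Ht'.
      + intros nu Hnu. destruct (Hl nu Hnu) as [[t Ht] [Hin Hv]]. exists t.
        split; [apply in_map_iff; exists (exist _ t Ht); auto|exact Hv]. }
  (* the tube: intersection of the first factors of a slice *)
  set (tube := fun (l : list T) x => is_ba A x /\ forall t, In t l -> snd (fst t) x).
  destruct (HMc {p : setfun Omega * list T | M (fst p) /\ slice (fst p) (snd p)}
              (fun j => tube (snd (proj1_sig j)))) as [l' Hl'].
  - intros [[mu l] Hj]. simpl.
    apply (weak_open_finite_inter A T (fun t => snd (fst t)) l).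
    intros t Ht. apply (proj1 (proj2 Hj) t Ht).
  - intros mu Hmu. destruct (Hslice mu Hmu) as [l Hsl].
    exists (exist _ (mu, l) (conj Hmu Hsl)). split; [apply HMb; exact Hmu|].
    intros t Ht. apply (proj1 Hsl t Ht).
  - exists (flat_map (fun j => map (fun t : T => fst (fst t)) (snd (proj1_sig j))) l').
    intros [mu nu] [Hmu Hnu]. destruct (Hl' mu Hmu) as [j [Hj [_ Hall]]].
    destruct (proj2_sig j) as [_ [Hr Hcv]]. destruct (Hcv nu Hnu) as [t [Ht Hv]].
    exists (fst (fst t)). split.
    + apply in_flat_map. exists j. split; [exact Hj|].
      apply (in_map (fun t0 : T => fst (fst t0))). exact Ht.
    + destruct (Hr t Ht) as [_ [_ [_ Hsub]]]. apply Hsub; simpl; auto.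
Qed.

Definition rclosed {Omega : Type} (A : (Omega -> Prop) -> Prop) (M S : setfun Omega -> Prop) : Prop :=
  exists W, weak_open A W /\ forall x, M x -> (W x <-> ~ S x).

Lemma rclosed_compact {Omega : Type} (A : (Omega -> Prop) -> Prop) (M S : setfun Omega -> Prop) :
  weakly_compact A M -> (forall x, S x -> M x) -> rclosed A M S ->
  compact_wrt (weak_open A) S.
Proof.
  intros [_ HMc] HSM [W [HW HWeq]] I U HU Hcov.
  destruct (HMc (option I) (fun o => match o with Some i => U i | None => W end)) as [l Hl].
  - intros [i|]; auto.
  - intros x Hx. destruct (classic (S x)) as [HS|HS].
    + destruct (Hcov x HS) as [i Hi]. exists (Some i). exact Hi.
    + exists None. apply HWeq; auto.
  - exists (flat_map (fun o => match o with Some i => i :: nil | None => nil end) l).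
    intros x Hx. destruct (Hl x (HSM x Hx)) as [[i|] [Hin Hi]].
    + exists i. split; [apply in_flat_map; exists (Some i); simpl; auto|exact Hi].
    + exfalso. exact (proj1 (HWeq x (HSM x Hx)) Hi Hx).
Qed.

Lemma dual_attains_max {Omega : Type} (A : (Omega -> Prop) -> Prop) (K : setfun Omega -> Prop)
  (phi : setfun Omega -> R) :
  (forall x, K x -> is_ba A x) -> compact_wrt (weak_open A) K -> (exists x, K x) ->
  is_dual A phi -> exists z, K z /\ forall w, K w -> phi w <= phi z.
Proof.
  intros HKb HKc Hne Hphi.
  destruct (compact_attains_min (weak_open A) K (fun x => - phi x) HKc Hne) as [z [Hz Hmin]].
  - intros x c Hx Hc. exists (fun y => is_ba A y /\ phi y < - c). split; [|split].
    + apply (weak_open_preimage A phi (fun y => y < - c) Hphi). intros y Hy. apply lt_open; auto.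
    + split; [auto|lra].
    + intros y _ [_ Hy]. lra.
  - exists z. split; [exact Hz|]. intros w Hw. specialize (Hmin w Hw). lra.
Qed.

Definition dot {Omega : Type} (L : list (Omega -> Prop)) (p q : setfun Omega) : R :=
  fold_right (fun E acc => p E * q E + acc) 0 L.

Lemma dot_ext {Omega : Type} (L : list (Omega -> Prop)) (p p' q q' : setfun Omega) :
  (forall E, In E L -> p E = p' E) -> (forall E, In E L -> q E = q' E) ->
  dot L p q = dot L p' q'.
Proof.
  induction L as [|E L IH]; intros Hp Hq; simpl; [reflexivity|].
  rewrite (Hp E (or_introl eq_refl)), (Hq E (or_introl eq_refl)),
    (IH (fun F HF => Hp F (or_intror HF)) (fun F HF => Hq F (or_intror HF))).
  reflexivity.
Qed.

Lemma dot_sub_r {Omega : Type} (L : list (Omega -> Prop)) (p a b : setfun Omega) :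
  dot L p (fun E => a E - b E) = dot L p a - dot L p b.
Proof. induction L as [|E L IH]; simpl; [ring|]. rewrite IH. ring. Qed.

Lemma dot_expand {Omega : Type} (L : list (Omega -> Prop)) (p r : setfun Omega) (t : R) :
  dot L (fun E => p E + t * r E) (fun E => p E + t * r E) =
  dot L p p + 2 * t * dot L p r + t * t * dot L r r.
Proof. induction L as [|E L IH]; simpl; [ring|]. rewrite IH. ring. Qed.

Lemma dot_nonneg {Omega : Type} (L : list (Omega -> Prop)) (p : setfun Omega) : 0 <= dot L p p.
Proof. induction L as [|E L IH]; simpl; [lra|]. pose proof (Rle_0_sqr (p E)). unfold Rsqr in *. lra. Qed.

Lemma dot_pos {Omega : Type} (L : list (Omega -> Prop)) (p : setfun Omega) :
  (exists E, In E L /\ p E <> 0) -> 0 < dot L p p.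
Proof.
  induction L as [|E L IH]; intros [F [HF Hp]]; simpl; [destruct HF|].
  pose proof (dot_nonneg L p). pose proof (Rle_0_sqr (p E)). unfold Rsqr in *.
  destruct HF as [<-|HF].
  - pose proof (Rsqr_pos_lt _ Hp). unfold Rsqr in *. lra.
  - assert (0 < dot L p p) by (apply IH; eauto). lra.
Qed.

Lemma integral_coords {Omega : Type} (L : list (Omega -> Prop)) (p mu : setfun Omega) :
  integral mu (map (fun E => (p E, E)) L) = dot L p mu.
Proof. induction L as [|E L IH]; simpl; [reflexivity|]. rewrite IH. ring. Qed.

(* A Lipschitz constant for the squared norm near p, valid for perturbations of size <= 1. *)
Definition coord_bound {Omega : Type} (L : list (Omega -> Prop)) (p : setfun Omega) : R :=
  fold_right (fun E acc => 2 * Rabs (p E) + 1 + acc) 0 L.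

Lemma coord_bound_nonneg {Omega : Type} (L : list (Omega -> Prop)) (p : setfun Omega) :
  0 <= coord_bound L p.
Proof. induction L as [|E L IH]; simpl; [lra|]. pose proof (Rabs_pos (p E)). lra. Qed.

Lemma dot_local_lipschitz {Omega : Type} (L : list (Omega -> Prop)) (p q : setfun Omega) (d : R) :
  d <= 1 -> (forall E, In E L -> Rabs (q E - p E) <= d) ->
  Rabs (dot L q q - dot L p p) <= d * coord_bound L p.
Proof.
  induction L as [|E L IH]; intros Hd Hq; simpl.
  - rewrite Rminus_diag, Rabs_R0, Rmult_0_r. lra.
  - specialize (IH Hd (fun F HF => Hq F (or_intror HF))).
    pose proof (Hq E (or_introl eq_refl)) as Hx.
    assert (Hterm : Rabs (q E * q E - p E * p E) <= d * (2 * Rabs (p E) + 1)).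
    { replace (q E * q E - p E * p E) with ((q E - p E) * ((q E - p E) + 2 * p E)) by ring.
      rewrite Rabs_mult. apply Rmult_le_compat; try apply Rabs_pos; [exact Hx|].
      eapply Rle_trans; [apply Rabs_triang|]. rewrite Rabs_mult, (Rabs_pos_eq 2) by lra. lra. }
    replace (q E * q E + dot L q q - (p E * p E + dot L p p))
      with ((q E * q E - p E * p E) + (dot L q q - dot L p p)) by ring.
    eapply Rle_trans; [apply Rabs_triang|]. lra.
Qed.

Lemma first_order_nonneg (a b : R) :
  0 <= b -> (forall t, 0 < t <= 1 -> 0 <= 2 * t * a + t * t * b) -> 0 <= a.
Proof.
  intros Hb H. destruct (Rle_lt_dec 0 a) as [Ha|Ha]; [exact Ha|].
  set (t := Rmin 1 (- a / (b + 1))).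
  assert (H0 : 0 < - a / (b + 1)) by (apply Rdiv_lt_0_compat; lra).
  assert (H1 : 0 < t) by (apply Rmin_glb_lt; lra).
  assert (H2 : t <= 1) by apply Rmin_l.
  assert (H3 : t * (b + 1) <= - a).
  { assert (h : t <= - a / (b + 1)) by apply Rmin_r.
    apply Rmult_le_compat_r with (r := b + 1) in h; [|lra].
    replace (- a / (b + 1) * (b + 1)) with (- a) in h by (field; lra). exact h. }
  specialize (H t (conj H1 H2)). nra.
Qed.

Definition setfun_sub {Omega : Type} (nu mu : setfun Omega) : setfun Omega :=
  fun E => nu E - mu E.

(* By compactness of M x N, finitely many sets of A already tell every element of M
   apart from every element of N. *)
Lemma finite_distinguishing_family {Omega : Type} (A : (Omega -> Prop) -> Prop)
  (HA : is_algebra A) (M N : setfun Omega -> Prop) :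
  weakly_compact A M -> weakly_compact A N -> (forall mu, ~ (M mu /\ N mu)) ->
  exists L, (forall E, In E L -> A E) /\
    forall mu nu, M mu -> N nu -> exists E, In E L /\ mu E <> nu E.
Proof.
  intros HMk HNk Hdis.
  set (U := fun (E : {E | A E}) (p : setfun Omega * setfun Omega) =>
              is_ba A (fst p) /\ is_ba A (snd p) /\ fst p (proj1_sig E) <> snd p (proj1_sig E)).
  destruct (product_compact A M N HMk HNk {E | A E} U) as [l Hl].
  - intros [E HE] [mu nu] [Hmu [Hnu Hne]]. simpl in *.
    set (r := Rabs (mu E - nu E) / 2).
    assert (Hr : 0 < r) by (unfold r; pose proof (Rabs_pos_lt (mu E - nu E)); lra).
    assert (HEL : forall F, In F (E :: nil) -> A F) by (intros F [<-|[]]; exact HE).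
    exists (coord_nbhd A (E :: nil) mu r), (coord_nbhd A (E :: nil) nu r).
    split; [apply coord_nbhd_open; auto|split; [apply coord_nbhd_open; auto|]].
    split; [apply coord_nbhd_center; auto|split; [apply coord_nbhd_center; auto|]].
    intros [mu' nu'] [Hmu' H1] [Hnu' H2]. simpl. split; [exact Hmu'|split; [exact Hnu'|]].
    specialize (H1 E (or_introl eq_refl)). specialize (H2 E (or_introl eq_refl)).
    intros Heq. simpl in Heq, H1, H2. rewrite Heq in H1.
    assert (Htri : Rabs (mu E - nu E) <= Rabs (nu' E - mu E) + Rabs (nu' E - nu E)).
    { rewrite (Rabs_minus_sym (nu' E) (mu E)).
      replace (mu E - nu E) with ((mu E - nu' E) + (nu' E - nu E)) by ring. apply Rabs_triang. }
    unfold r in *. lra.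
  - intros [mu nu] [Hmu Hnu]. simpl in *.
    destruct (ba_separated_by_set A mu nu (proj1 HMk mu Hmu) (proj1 HNk nu Hnu))
      as [E [HE Hne]].
    { intros ->. exact (Hdis nu (conj Hmu Hnu)). }
    exists (exist _ E HE). split; [apply HMk; auto|split; [apply HNk; auto|exact Hne]].
  - exists (map (@proj1_sig _ _) l). split.
    + intros E HE. apply in_map_iff in HE. destruct HE as [[F HF] [<- _]]. exact HF.
    + intros mu nu Hmu Hnu. destruct (Hl (mu, nu) (conj Hmu Hnu)) as [[E HE] [Hin [_ [_ Hne]]]].
      exists E. split; [apply in_map_iff; exists (exist _ E HE); auto|exact Hne].
Qed.

Definition sq_dist {Omega : Type} (L : list (Omega -> Prop)) (p : setfun Omega * setfun Omega) : R :=
  dot L (setfun_sub (snd p) (fst p)) (setfun_sub (snd p) (fst p)).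

Lemma sq_dist_lsc {Omega : Type} (A : (Omega -> Prop) -> Prop) (HA : is_algebra A)
  (L : list (Omega -> Prop)) :
  (forall E, In E L -> A E) ->
  forall p c, is_ba A (fst p) -> is_ba A (snd p) -> c < sq_dist L p ->
    exists W, weak_open2 A W /\ W p /\ forall q, W q -> c < sq_dist L q.
Proof.
  intros HL [mu nu] c Hmu Hnu Hc. simpl in *.
  pose proof (coord_bound_nonneg L (setfun_sub nu mu)) as HC.
  set (C := coord_bound L (setfun_sub nu mu)) in *.
  set (e := sq_dist L (mu, nu) - c).
  set (d := Rmin 1 (e / (C + 1))).
  assert (Hd0 : 0 < d) by (apply Rmin_glb_lt; [lra|apply Rdiv_lt_0_compat; unfold e; lra]).
  assert (Hd1 : d <= 1) by apply Rmin_l.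
  assert (HdC : d * C < e).
  { assert (h : d <= e / (C + 1)) by apply Rmin_r.
    apply Rmult_le_compat_r with (r := C + 1) in h; [|lra].
    replace (e / (C + 1) * (C + 1)) with e in h by (field; lra). nra. }
  exists (fun q => coord_nbhd A L mu (d / 2) (fst q) /\ coord_nbhd A L nu (d / 2) (snd q)).
  split; [apply rect_open2; apply coord_nbhd_open; auto|].
  split; [split; apply coord_nbhd_center; auto; lra|].
  intros [mu' nu'] [[_ H1] [_ H2]]. simpl in *.
  assert (Hcoord : forall E, In E L ->
            Rabs (setfun_sub nu' mu' E - setfun_sub nu mu E) <= d).
  { intros E HE. specialize (H1 E HE). specialize (H2 E HE).
    apply Rabs_def2 in H1. apply Rabs_def2 in H2.
    unfold setfun_sub. apply Rlt_le, Rabs_def1; lra. }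
  pose proof (dot_local_lipschitz L (setfun_sub nu mu) (setfun_sub nu' mu') d Hd1 Hcoord) as Hlip.
  fold C in Hlip.
  assert (Hdrop : sq_dist L (mu, nu) - sq_dist L (mu', nu') <= d * C).
  { eapply Rle_trans; [apply Rle_abs|]. rewrite Rabs_minus_sym. exact Hlip. }
  unfold e in HdC. lra.
Qed.

(* Variational inequality at a closest pair: if (mu0, nu0) minimises the coordinate
   distance over M x N and p = nu0 - mu0, then <p, nu - mu> >= <p, p> on M x N.
   (Move along the segments towards mu and nu and use first-order optimality.) *)
Lemma closest_pair_variational {Omega : Type} (L : list (Omega -> Prop))
  (M N : setfun Omega -> Prop) (mu0 nu0 : setfun Omega) :
  convex M -> convex N -> M mu0 -> N nu0 ->
  (forall mu nu, M mu -> N nu -> sq_dist L (mu0, nu0) <= sq_dist L (mu, nu)) ->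
  forall mu nu, M mu -> N nu ->
    dot L (setfun_sub nu0 mu0) (setfun_sub nu0 mu0)
      <= dot L (setfun_sub nu0 mu0) (setfun_sub nu mu).
Proof.
  intros HMc HNc Hmu0 Hnu0 Hmin mu nu Hmu Hnu.
  set (p := setfun_sub nu0 mu0).
  set (r := fun E => setfun_sub nu mu E - p E).
  assert (Hfo : 0 <= dot L p r).
  { apply (first_order_nonneg _ (dot L r r) (dot_nonneg L r)). intros t Ht.
    assert (Hmt : M (ba_lincomb t mu (1 - t) mu0)) by (apply HMc; auto; lra).
    assert (Hnt : N (ba_lincomb t nu (1 - t) nu0)) by (apply HNc; auto; lra).
    assert (Hseg : sq_dist L (ba_lincomb t mu (1 - t) mu0, ba_lincomb t nu (1 - t) nu0) =
                   dot L (fun E => p E + t * r E) (fun E => p E + t * r E)).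
    { apply dot_ext; intros E _; unfold r, p, setfun_sub, ba_lincomb; simpl; ring. }
    specialize (Hmin _ _ Hmt Hnt). rewrite Hseg, dot_expand in Hmin.
    change (sq_dist L (mu0, nu0)) with (dot L p p) in Hmin. lra. }
  unfold r in Hfo. rewrite dot_sub_r in Hfo. lra.
Qed.

(* Part (i), main direction: disjoint convex weakly compact sets are strictly separated
   by the simple function sum_{E in L} p(E) 1_E, where L is a finite distinguishing
   family and p the difference of a closest pair of coordinate vectors. *)
Lemma strict_separation {Omega : Type} (A : (Omega -> Prop) -> Prop) (HA : is_algebra A)
  (M N : setfun Omega -> Prop) :
  convex M -> weakly_compact A M -> convex N -> weakly_compact A N ->
  (forall mu, ~ (M mu /\ N mu)) ->
  exists f, is_simple A f /\ exists c1 c2, c2 < c1 /\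
    (forall nu, N nu -> c1 <= integral nu f) /\ (forall mu, M mu -> integral mu f <= c2).
Proof.
  intros HMc HMk HNc HNk Hdis.
  destruct (classic (exists mu, M mu)) as [[m0 Hm0]|HM0].
  2: { exists nil. split; [constructor|]. exists 0, (-1). simpl.
       split; [lra|split; [intros; lra|intros mu Hmu; exfalso; eauto]]. }
  destruct (classic (exists nu, N nu)) as [[n0 Hn0]|HN0].
  2: { exists nil. split; [constructor|]. exists 1, 0. simpl.
       split; [lra|split; [intros nu Hnu; exfalso; eauto|intros; lra]]. }
  destruct (finite_distinguishing_family A HA M N HMk HNk Hdis) as [L [HLA HL]].
  destruct (compact_attains_min (weak_open2 A) (fun p => M (fst p) /\ N (snd p)) (sq_dist L)
              (product_compact A M N HMk HNk) (ex_intro _ (m0, n0) (conj Hm0 Hn0)))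
    as [[mu0 nu0] [[Hmu0 Hnu0] Hmin]].
  { intros q c [Hq1 Hq2] Hc.
    destruct (sq_dist_lsc A HA L HLA q c (proj1 HMk _ Hq1) (proj1 HNk _ Hq2) Hc)
      as [W [HW [HWq HWc]]].
    exists W. auto. }
  simpl in Hmu0, Hnu0.
  pose proof (closest_pair_variational L M N mu0 nu0 HMc HNc Hmu0 Hnu0
                (fun mu nu Hmu Hnu => Hmin (mu, nu) (conj Hmu Hnu))) as Hvar.
  set (p := setfun_sub nu0 mu0) in *.
  exists (map (fun E => (p E, E)) L). split.
  { apply Forall_forall. intros x Hx. apply in_map_iff in Hx.
    destruct Hx as [E [<- HE]]. exact (HLA E HE). }
  exists (dot L p nu0), (dot L p mu0).
  assert (Hpos : 0 < dot L p p).
  { apply dot_pos. destruct (HL mu0 nu0 Hmu0 Hnu0) as [E [HE Hne]].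
    exists E. split; [exact HE|]. unfold p, setfun_sub. lra. }
  assert (Hgap : dot L p p = dot L p nu0 - dot L p mu0) by exact (dot_sub_r L p nu0 mu0).
  split; [lra|split].
  - intros nu Hnu. rewrite integral_coords.
    pose proof (Hvar mu0 nu Hmu0 Hnu) as H. unfold setfun_sub in H.
    rewrite dot_sub_r in H. lra.
  - intros mu Hmu. rewrite integral_coords.
    pose proof (Hvar mu nu0 Hmu Hnu0) as H. unfold setfun_sub in H.
    rewrite dot_sub_r in H. lra.
Qed.

Definition face {Omega : Type} (M S : setfun Omega -> Prop) : Prop :=
  forall mu1 mu2 t, M mu1 -> M mu2 -> 0 < t < 1 ->
    S (ba_lincomb t mu1 (1 - t) mu2) -> S mu1 /\ S mu2.

Definition closed_face {Omega : Type} (A : (Omega -> Prop) -> Prop) (M S : setfun Omega -> Prop)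
  : Prop :=
  (forall x, S x -> M x) /\ (exists x, S x) /\ rclosed A M S /\ face M S.

Lemma closed_face_whole {Omega : Type} (A : (Omega -> Prop) -> Prop) (M : setfun Omega -> Prop) :
  (exists x, M x) -> closed_face A M M.
Proof.
  intros Hne. split; [auto|split; [exact Hne|split]].
  - exists (fun _ => False). split; [intros mu []|]. intros x Hx. tauto.
  - intros mu1 mu2 t H1 H2 _ _. auto.
Qed.

Lemma argmax_face {Omega : Type} (A : (Omega -> Prop) -> Prop) (HA : is_algebra A)
  (M S : setfun Omega -> Prop) (f : simple_rep Omega) :
  weakly_compact A M -> closed_face A M S -> is_simple A f ->
  exists S', closed_face A M S' /\ (forall x, S' x -> S x) /\
    forall x, S' x -> forall w, S w -> integral w f <= integral x f.
Proof.
  intros HMk [HSM [Hne [Hcl Hface]]] Hf.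
  set (phi := fun x => integral x f).
  destruct (dual_attains_max A S phi (fun x Hx => proj1 HMk x (HSM x Hx))
              (rclosed_compact A M S HMk HSM Hcl) Hne (integral_dual A HA f Hf))
    as [z0 [Hz0 Hmax]].
  exists (fun x => S x /\ phi z0 <= phi x). split; [split; [|split; [|split]]|split].
  - intros x [Hx _]. auto.
  - exists z0. split; [exact Hz0|lra].
  - destruct Hcl as [W [HW HWeq]].
    exists (fun x => W x \/ (is_ba A x /\ phi x < phi z0)). split.
    + apply weak_open_or; [exact HW|].
      apply (weak_open_preimage A phi (fun y => y < phi z0) (integral_dual A HA f Hf)).
      intros y Hy. apply lt_open; auto.
    + intros x Hx. rewrite HWeq by exact Hx. split.
      * intros [H|[_ H]] [H1 H2]; [auto|lra].
      * intros H. destruct (classic (S x)) as [HS|HS]; [right|left; exact HS].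
        split; [apply (proj1 HMk); auto|]. apply Rnot_le_lt. intros Hle. auto.
  - intros mu1 mu2 t H1 H2 Ht [HS Hle].
    destruct (Hface mu1 mu2 t H1 H2 Ht HS) as [HS1 HS2].
    unfold phi in *. rewrite integral_lincomb in Hle.
    pose proof (Hmax mu1 HS1). pose proof (Hmax mu2 HS2). unfold phi in *.
    split; split; auto; nra.
  - intros x [Hx _]. exact Hx.
  - intros x [_ Hle] w Hw. pose proof (Hmax w Hw). unfold phi in *. lra.
Qed.

(* A closed face containing two distinct points has a strictly smaller closed subface:
   maximise the value on a set of A on which the two points differ. *)
Lemma split_face {Omega : Type} (A : (Omega -> Prop) -> Prop) (HA : is_algebra A)
  (M S : setfun Omega -> Prop) (x y : setfun Omega) :
  weakly_compact A M -> closed_face A M S -> S x -> S y -> x <> y ->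
  exists S', closed_face A M S' /\ (forall z, S' z -> S z) /\ ~ (forall z, S z -> S' z).
Proof.
  intros HMk HS Hx Hy Hxy. pose proof (proj1 HS) as HSM.
  destruct (ba_separated_by_set A x y (proj1 HMk x (HSM x Hx)) (proj1 HMk y (HSM y Hy)) Hxy)
    as [E [HE Hne]].
  destruct (argmax_face A HA M S ((1, E) :: nil) HMk HS) as [S' [HS' [Hsub Hmax]]].
  { repeat constructor. exact HE. }
  exists S'. split; [exact HS'|split; [exact Hsub|]]. intros Hall.
  pose proof (Hmax x (Hall x Hx) y Hy). pose proof (Hmax y (Hall y Hy) x Hx).
  simpl in *. lra.
Qed.

(* The intersection of a nonempty chain of closed faces is a closed face: its complement
   in M is the union of the complements, and it is nonempty by weak compactness. *)
Lemma chain_inter_face {Omega : Type} (A : (Omega -> Prop) -> Prop) (M : setfun Omega -> Prop)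
  (J : Type) (F : J -> setfun Omega -> Prop) (j0 : J) :
  weakly_compact A M -> (forall j, closed_face A M (F j)) ->
  (forall i j, (forall x, F i x -> F j x) \/ (forall x, F j x -> F i x)) ->
  closed_face A M (fun x => forall j, F j x).
Proof.
  intros HMk HF Hchain.
  set (Idx := {p : J * (setfun Omega -> Prop) |
                 weak_open A (snd p) /\ forall x, M x -> (snd p x <-> ~ F (fst p) x)}).
  assert (Hcompl : forall x, M x -> ((exists i : Idx, snd (proj1_sig i) x) <-> ~ forall j, F j x)).
  { intros x Hx. split.
    - intros [[[j W] [HW HWeq]] HWx] Hall. simpl in *. exact (proj1 (HWeq x Hx) HWx (Hall j)).
    - intros Hn. apply not_all_ex_not in Hn. destruct Hn as [j Hj].
      destruct (HF j) as [_ [_ [[W [HW HWeq]] _]]].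
      exists (exist _ (j, W) (conj HW HWeq)). simpl. apply HWeq; auto. }
  split; [|split; [|split]].
  - intros x Hx. apply (proj1 (HF j0)). exact (Hx j0).
  - apply NNPP. intros Hempty.
    destruct (proj2 HMk Idx (fun i => snd (proj1_sig i))) as [l Hl].
    + intros i. apply (proj2_sig i).
    + intros x Hx. apply Hcompl; [exact Hx|]. intros Hall. apply Hempty. eauto.
    + destruct (proj1 (proj2 (HF j0))) as [z0 Hz0].
      destruct (list_least (fun i k : Idx => forall x, F (fst (proj1_sig i)) x ->
                                             F (fst (proj1_sig k)) x) l) as [m [Hm Hleast]].
      * intros a x Hx. exact Hx.
      * intros a b c H1 H2 x Hx. auto.
      * intros a b _ _. apply Hchain.
      * destruct (Hl z0 (proj1 (HF j0) z0 Hz0)) as [i [Hi _]]. eauto.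
      * destruct (proj1 (proj2 (HF (fst (proj1_sig m))))) as [z Hz].
        assert (HzM : M z) by exact (proj1 (HF _) z Hz).
        destruct (Hl z HzM) as [k [Hk Hkz]].
        destruct (proj2_sig k) as [_ HkW].
        exact (proj1 (HkW z HzM) Hkz (Hleast k Hk z Hz)).
  - exists (fun x => exists i : Idx, snd (proj1_sig i) x). split.
    + apply (weak_open_union A Idx (fun i => snd (proj1_sig i))). intros i. apply (proj2_sig i).
    + exact Hcompl.
  - intros mu1 mu2 t H1 H2 Ht Hall.
    split; intros j; apply (proj2 (proj2 (proj2 (HF j))) mu1 mu2 t H1 H2 Ht (Hall j)).
Qed.

Lemma zorn_preorder {T : Type} (t0 : T) (R : T -> T -> Prop) :
  (forall t, R t t) -> (forall r s t, R r s -> R s t -> R r t) ->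
  (forall C : T -> Prop, (forall s t, C s -> C t -> R s t \/ R t s) ->
     exists t, forall s, C s -> R s t) ->
  exists t, forall s, R t s -> R s t.
Proof.
  intros Hrefl Htrans Hchain.
  destruct (@classical_sets.ZL_preorder T t0 (fun a b => boolp.asbool (R a b))) as [t Ht].
  - intros a. apply boolp.asboolT, Hrefl.
  - intros r s u H1 H2. apply boolp.asboolT.
    apply Htrans with s; apply boolp.asboolW; assumption.
  - intros C HC. destruct (Hchain C) as [t Ht].
    + intros s u Hs Hu.
      destruct (HC s u Hs Hu) as [H|H]; [left|right]; apply boolp.asboolW, H.
    + exists t. intros s Hs. apply boolp.asboolT, Ht, Hs.
  - exists t. intros s Hs. apply boolp.asboolW, Ht, boolp.asboolT, Hs.
Qed.

Lemma minimal_closed_face {Omega : Type} (A : (Omega -> Prop) -> Prop)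
  (M S0 : setfun Omega -> Prop) :
  weakly_compact A M -> closed_face A M S0 ->
  exists S, closed_face A M S /\ (forall x, S x -> S0 x) /\
    forall S', closed_face A M S' -> (forall x, S' x -> S x) -> forall x, S x -> S' x.
Proof.
  intros HMk HS0.
  set (T := {S : setfun Omega -> Prop | closed_face A M S /\ forall x, S x -> S0 x}).
  set (Rsub := fun a b : T => forall x, proj1_sig b x -> proj1_sig a x).
  destruct (zorn_preorder (exist _ S0 (conj HS0 (fun x Hx => Hx)) : T) Rsub) as [[S [HS HSS0]] Hmin].
  - intros a x Hx. exact Hx.
  - intros a b c H1 H2 x Hx. auto.
  - intros C HC. destruct (classic (exists s, C s)) as [[s0 Hs0]|Hno].
    + set (F := fun j : {s : T | C s} => proj1_sig (proj1_sig j)).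
      assert (Hface : closed_face A M (fun x => forall j, F j x)).
      { apply (chain_inter_face A M _ F (exist _ s0 Hs0) HMk).
        - intros j. apply (proj1 (proj2_sig (proj1_sig j))).
        - intros [a Ha] [b Hb]. unfold F. simpl. destruct (HC a b Ha Hb); auto. }
      assert (HsubS0 : forall x, (forall j, F j x) -> S0 x).
      { intros x Hx. apply (proj2 (proj2_sig s0)). exact (Hx (exist _ s0 Hs0)). }
      exists (exist _ (fun x => forall j, F j x) (conj Hface HsubS0) : T).
      intros s Hs x Hx. exact (Hx (exist _ s Hs)).
    + exists (exist _ S0 (conj HS0 (fun x Hx => Hx))). intros s Hs. exfalso. eauto.
  - exists S. split; [exact HS|split; [exact HSS0|]]. intros S' HS' Hsub.
    exact (Hmin (exist _ S' (conj HS' (fun x Hx => HSS0 x (Hsub x Hx)))) Hsub).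
Qed.

Lemma minimal_face_extreme {Omega : Type} (A : (Omega -> Prop) -> Prop) (HA : is_algebra A)
  (M S : setfun Omega -> Prop) :
  weakly_compact A M -> closed_face A M S ->
  (forall S', closed_face A M S' -> (forall x, S' x -> S x) -> forall x, S x -> S' x) ->
  exists x, S x /\ extreme_point M x.
Proof.
  intros HMk HS Hmin. pose proof HS as [HSM [[x0 Hx0] [_ Hface]]].
  assert (Hsingle : forall y, S y -> y = x0).
  { intros y Hy. apply NNPP. intros Hne.
    destruct (split_face A HA M S y x0 HMk HS Hy Hx0 Hne) as [S' [HS' [Hsub Hns]]].
    apply Hns. exact (Hmin S' HS' Hsub). }
  exists x0. split; [exact Hx0|split; [exact (HSM x0 Hx0)|]].
  intros mu1 mu2 t H1 H2 Ht Heq. rewrite Heq in Hx0.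
  destruct (Hface mu1 mu2 t H1 H2 Ht Hx0) as [Hs1 Hs2].
  rewrite (Hsingle mu1 Hs1), (Hsingle mu2 Hs2). reflexivity.
Qed.

Lemma max_at_extreme_point {Omega : Type} (A : (Omega -> Prop) -> Prop) (HA : is_algebra A)
  (M : setfun Omega -> Prop) (f : simple_rep Omega) :
  weakly_compact A M -> (exists x, M x) -> is_simple A f ->
  exists mu, extreme_point M mu /\ forall m, M m -> integral m f <= integral mu f.
Proof.
  intros HMk Hne Hf.
  destruct (argmax_face A HA M M f HMk (closed_face_whole A M Hne) Hf)
    as [S' [HS' [_ Hmax]]].
  destruct (minimal_closed_face A M S' HMk HS') as [S [HS [HSS' Hmin]]].
  destruct (minimal_face_extreme A HA M S HMk HS Hmin) as [x [Hx Hext]].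
  exists x. split; [exact Hext|]. intros m Hm. exact (Hmax x (HSS' x Hx) m Hm).
Qed.

(* A point of ba(A) outside M is strictly separated from M (part (i) with N = {m}). *)
Lemma point_separation {Omega : Type} (A : (Omega -> Prop) -> Prop) (HA : is_algebra A)
  (M : setfun Omega -> Prop) (m : setfun Omega) :
  convex M -> weakly_compact A M -> is_ba A m -> ~ M m ->
  exists f, is_simple A f /\ exists c1 c2, c2 < c1 /\
    c1 <= integral m f /\ forall mu, M mu -> integral mu f <= c2.
Proof.
  intros HMc HMk Hm Hout.
  assert (Hconv : convex (fun x : setfun Omega => x = m)).
  { intros mu nu t -> -> _. apply functional_extensionality. intros E.
    unfold ba_lincomb. ring. }
  assert (Hcomp : weakly_compact A (fun x : setfun Omega => x = m)).
  { split; [intros mu ->; exact Hm|]. intros I U _ Hcov.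
    destruct (Hcov m eq_refl) as [i Hi]. exists (i :: nil). intros mu ->. exists i. simpl. auto. }
  destruct (strict_separation A HA M (fun x => x = m) HMc HMk Hconv Hcomp)
    as [f [Hf [c1 [c2 [Hlt [HN HM]]]]]].
  { intros mu [HMmu ->]. exact (Hout HMmu). }
  exists f. split; [exact Hf|]. exists c1, c2. auto.
Qed.

Theorem mainTheorem12 (Omega : Type) (A : (Omega -> Prop) -> Prop)
  (HA : is_algebra A)
  (M N : setfun Omega -> Prop)
  (HMc : convex M) (HMk : weakly_compact A M)
  (HNc : convex N) (HNk : weakly_compact A N) :
  ((forall mu, ~ (M mu /\ N mu)) <->
     exists f : simple_rep Omega, is_simple A f /\
       exists c1 c2 : R, c2 < c1 /\
         (forall nu, N nu -> c1 <= integral nu f) /\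
         (forall mu, M mu -> integral mu f <= c2))
  /\
  (exists (K : simple_rep Omega -> Prop) (M0 : setfun Omega -> Prop),
     (forall k, K k -> is_simple A k) /\
     (forall mu, M0 mu -> extreme_point M mu) /\
     (forall k, K k -> (exists mu, M0 mu) ->
        exists mu, M0 mu /\ forall mu', M0 mu' -> integral mu' k <= integral mu k) /\
     (forall m, M m <->
        (is_ba A m /\
         forall k, K k -> exists mu, M0 mu /\ integral m k <= integral mu k))).
Proof.
  split; [split|].
  - exact (strict_separation A HA M N HMc HMk HNc HNk).
  - intros [f [_ [c1 [c2 [Hlt [HN HM]]]]]] mu [Hm Hn].
    specialize (HN mu Hn). specialize (HM mu Hm). lra.
  -
    exists (is_simple A), (extreme_point M).
    split; [auto|split; [auto|split]].
    + intros k Hk [mu [Hmu _]].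
      destruct (max_at_extreme_point A HA M k HMk (ex_intro _ mu Hmu) Hk) as [mu0 [Hext Hmax]].
      exists mu0. split; [exact Hext|]. intros mu' [HM' _]. exact (Hmax mu' HM').
    + intros m. split.
      * intros Hm. split; [exact (proj1 HMk m Hm)|]. intros k Hk.
        destruct (max_at_extreme_point A HA M k HMk (ex_intro _ m Hm) Hk) as [mu0 [Hext Hmax]].
        exists mu0. auto.
      * intros [Hb Hall]. apply NNPP. intros Hout.
        destruct (point_separation A HA M m HMc HMk Hb Hout)
          as [f [Hf [c1 [c2 [Hlt [Hm HM]]]]]].
        destruct (Hall f Hf) as [mu [[HMmu _] Hle]].
        specialize (HM mu HMmu). lra.
Qed.
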